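(* Let $(\vec S,\le,{}^* )$ be a separation system, let $\mathcal F\subseteq 2^{\vec S}$ be a set of stars, and let $(T,\alpha)$ be an irredundant $S$-tree over $\mathcal F$. Let $e,f$ be distinct edges of $T$ with orientations $\vec e<\overleftarrow f$ (in the natural partial ordering of $\vec E(T)$) such that $\alpha(\vec e)=\alpha(\vec f)=:\vec r$. Then $\vec r$ is trivial in $\vec S$. In particular, $T$ cannot have two distinct leaves both associated with the same star $\{\overleftarrow r\}$ unless $\vec r$ is trivial, or $T$ has only one edge $e$ and $\alpha(\vec e)=\alpha(\overleftarrow e)$ is degenerate.
   Context: A separation system $(\vec S,\le,{}^* )$ is a partially ordered set $\vec S$ together with an involution ${}^*$ that is order-reversing, i.e. $\vec r\le\vec s\iff \vec r^{\,*}\ge\vec s^{\,*}$. For $\vec s\in\vec S$ we write $\overleftarrow s:=\vec s^{\,*}$. A separation is a set $s=\{\vec s,\overleftarrow s\}$; $S$ denotes the set of all separations; $s$ and $\vec s$ are degenerate if $\vec s=\overleftarrow s$. An element $\vec r\in\vec S$ is trivial in $\vec S$ if there is $s\in S$ with $\vec r<\vec s$ and $\vec r<\overleftarrow s$. A star is a nonempty set $\sigma\subseteq\vec S$ such that $\vec r\le\overleftarrow s$ for all distinct $\vec r,\vec s\in\sigma$. An $S$-tree is a pair $(T,\alpha)$ where $T$ is a finite tree with at least one edge and $\alpha:\vec E(T)\to\vec S$, with $\vec E(T)=\{(x,y):\{x,y\}\in E(T)\}$, satisfies $\alpha(y,x)=\alpha(x,y)^*$ for every edge $xy$. For a node $t$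 let $\vec F_t=\{(x,t):xt\in E(T)\}$; $\alpha(\vec F_t)$ is said to be associated with $t$. The $S$-tree is over $\mathcal F\subseteq 2^{\vec S}$ if $\alpha(\vec F_t)\in\mathcal F$ for every node $t$. It is redundant if some node $t$ has distinct neighbours $t',t''$ with $\alpha(t',t)=\alpha(t'',t)$, and irredundant otherwise. The natural partial ordering on $\vec E(T)$ is defined by $(x,y)<(u,v)$ if $\{x,y\}\neq\{u,v\}$ and the unique path in $T$ that meets $\{x,y\}$ only in its first vertex and $\{u,v\}$ only in its last vertex starts at $y$ and ends at $u$. For an edge $e=xy$, $\vec e$ and $\overleftarrow e$ denote its two orientations $(x,y),(y,x)$. *)

From mathcomp Require Import all_boot.
Set Implicit Arguments. Unset Strict Implicit. Unset Printing Implicit Defensive.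

Record sepsys := SepSys {
  sep_car :> Type;
  sep_le : sep_car -> sep_car -> Prop;
  sep_inv : sep_car -> sep_car;
  sep_le_refl : forall x, sep_le x x;
  sep_le_antisym : forall x y, sep_le x y -> sep_le y x -> x = y;
  sep_le_trans : forall x y z, sep_le x y -> sep_le y z -> sep_le x z;
  sep_inv_invol : forall x, sep_inv (sep_inv x) = x;
  sep_inv_rev : forall x y, sep_le x y <-> sep_le (sep_inv y) (sep_inv x)
}.

Definition sep_lt (S : sepsys) (x y : S) : Prop := sep_le x y /\ x <> y.

Definition trivial_sep (S : sepsys) (r : S) : Prop :=
  exists s : S, sep_lt r s /\ sep_lt r (sep_inv s).

Definition degenerate (S : sepsys) (s : S) : Prop := sep_inv s = s.

Definition is_star (S : sepsys) (sigma : S -> Prop) : Prop :=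
  (exists r, sigma r) /\
  forall r s, sigma r -> sigma s -> r <> s -> sep_le r (sep_inv s).

Definition is_tree (T : finType) (adj : rel T) : Prop :=
  symmetric adj /\ irreflexive adj /\
  (forall x y : T, connect adj x y) /\
  (forall p : seq T, uniq p -> 3 <= size p -> ~~ cycle adj p) /\
  (exists x y, adj x y).

Definition is_Stree (S : sepsys) (T : finType) (adj : rel T) (alpha : T -> T -> S) :=
  is_tree adj /\ forall x y, adj x y -> alpha y x = sep_inv (alpha x y).

Definition assoc_star (S : sepsys) (T : finType) (adj : rel T) (alpha : T -> T -> S)
  (t : T) : S -> Prop := fun s => exists x, adj x t /\ s = alpha x t.

Definition Stree_over (S : sepsys) (T : finType) (adj : rel T) (alpha : T -> T -> S)
  (F : (S -> Prop) -> Prop) : Prop := forall t, F (assoc_star adj alpha t).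

Definition irredundant (S : sepsys) (T : finType) (adj : rel T) (alpha : T -> T -> S) :=
  forall t t' t'', adj t' t -> adj t'' t -> t' <> t'' -> alpha t' t <> alpha t'' t.

Definition same_edge (T : Type) (x y u v : T) : Prop :=
  (x = u /\ y = v) \/ (x = v /\ y = u).

(** Natural partial ordering on oriented edges: (x,y) < (u,v) iff {x,y} <> {u,v}
    and the path meeting {x,y} only in its first vertex and {u,v} only in its last
    vertex starts at y and ends at u. *)
Definition edge_lt (T : finType) (adj : rel T) (x y u v : T) : Prop :=
  ~ same_edge x y u v /\
  exists p : seq T, [/\ path adj y p, last y p = u, uniq (y :: p),
                        x \notin y :: p & v \notin y :: p].

From mathcomp Require Import all_boot.
From Stdlib Require Import Classical.
Set Implicit Arguments.
Unset Strict Implicit.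
Unset Printing Implicit Defensive.

(* Walk along the path from e towards f.  The star at each inner vertex gives
   r = alpha(e) <= alpha(g) for the next edge g, oriented away from e, and
   r = alpha(f) <= alpha(g)^* by the same star inequalities read backwards
   from f.  Irredundancy makes the second inequality strict; if the first is
   an equality, g takes over the role of e and we continue on a shorter
   path, otherwise alpha(g) witnesses that r is trivial.  Two leaves t1, t2
   associated with {r<-} give the pendant edges (t1,x1) < (x2,t2), both
   mapped to r, unless the tree is the single edge t1 t2. *)

Lemma sep_inv_inj (S : sepsys) (x y : S) : sep_inv x = sep_inv y -> x = y.
Proof. by move=> Exy; rewrite -(sep_inv_invol x) Exy sep_inv_invol. Qed.

Lemma star_le_assoc (S : sepsys) (F : (S -> Prop) -> Prop) (T : finType)
    (adj : rel T) (alpha : T -> T -> S) :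
  (forall sigma, F sigma -> is_star sigma) ->
  Stree_over adj alpha F -> irredundant adj alpha ->
  forall t x y, adj x t -> adj y t -> x <> y ->
    sep_le (alpha x t) (sep_inv (alpha y t)).
Proof.
move=> Fstar over irr t x y xt yt neq_xy.
have [_ star_le] := Fstar _ (over t).
by apply: star_le; [exists x | exists y | exact: irr].
Qed.

Section TreePaths.
Variables (T : finType) (adj : rel T).
Hypotheses (adj_sym : symmetric adj) (adj_irr : irreflexive adj).

Lemma leaf_notin_path t x q :
  (forall y, adj y t <-> y = x) -> path adj x q -> uniq (x :: q) ->
  last x q != t -> t \notin x :: q.
Proof.
move=> leaf_t pq uq last_t; rewrite inE negb_or; apply/andP; split.
  by apply/eqP => Etx; have := (leaf_t x).2 erefl; rewrite -Etx adj_irr.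
apply/negP => t_in; move: pq uq last_t; case/splitPr: t_in => q1 q2.
rewrite cat_path last_cat /= => /andP[_].
case: q2 => [|z q2] /=; first by rewrite eqxx.
move=> /and3P[_ tz _] /andP[+ _] _.
have -> : z = x by apply/leaf_t; rewrite adj_sym.
by rewrite mem_cat !inE eqxx !orbT.
Qed.

Lemma leaves_edge_lt t1 t2 x1 x2 :
  (forall y, adj y t1 <-> y = x1) -> (forall y, adj y t2 <-> y = x2) ->
  t1 <> t2 -> x1 != t2 -> connect adj x1 t2 -> edge_lt adj t1 x1 x2 t2.
Proof.
move=> leaf1 leaf2 neq_t neq_x1t2 /connectP [p pp last_p].
split; first by case=> [[_ Ex1]|[]] //; rewrite Ex1 eqxx in neq_x1t2.
move: last_p; case: (shortenP pp) => q pq uq _ /esym last_q.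
have t1_notin : t1 \notin x1 :: q.
  by apply: leaf_notin_path => //; rewrite last_q; apply/eqP => /esym.
move: pq uq last_q t1_notin; case/lastP: q => [|q z].
  by move=> _ _ /= Ex1; rewrite Ex1 eqxx in neq_x1t2.
rewrite last_rcons => + + Ez; rewrite {z}Ez.
rewrite rcons_path => /andP[pq adj_t2].
rewrite -rcons_cons rcons_uniq => /andP[t2_notin uq].
rewrite mem_rcons inE negb_or => /andP[_ t1_notin].
by exists q; split => //; exact: (leaf2 _).1 adj_t2.
Qed.

Lemma two_leaf_tree t1 t2 :
  (forall x y : T, connect adj x y) ->
  (forall y, adj y t1 <-> y = t2) -> (forall y, adj y t2 <-> y = t1) ->
  forall z, z = t1 \/ z = t2.
Proof.
move=> conn leaf1 leaf2 z.
have step u v : adj u v -> u \in pred2 t1 t2 -> v \in pred2 t1 t2.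
  move=> uv /pred2P [] Eu; rewrite Eu adj_sym in uv.
  - by rewrite (leaf1 v).1 // !inE eqxx orbT.
  - by rewrite (leaf2 v).1 // !inE eqxx.
have closed12 : closed adj (pred2 t1 t2).
  by move=> x y xy; apply/idP/idP; apply: step; rewrite // adj_sym.
have := closed_connect closed12 (conn t1 z).
by rewrite !inE eqxx => /esym /pred2P.
Qed.

Lemma two_leaf_tree_edges t1 t2 :
  (forall x y : T, connect adj x y) ->
  (forall y, adj y t1 <-> y = t2) -> (forall y, adj y t2 <-> y = t1) ->
  forall u v, adj u v -> same_edge u v t1 t2.
Proof.
move=> conn leaf1 leaf2 u v uv.
have neq_uv : u <> v by move=> Euv; rewrite Euv adj_irr in uv.
have two := two_leaf_tree conn leaf1 leaf2.
case: (two u) => Eu; case: (two v) => Ev; rewrite Eu Ev in neq_uv *;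
  [by case: neq_uv | by left | by right | by case: neq_uv].
Qed.

End TreePaths.

Section STreeChains.
Variables (S : sepsys) (T : finType) (adj : rel T) (alpha : T -> T -> S).
Hypotheses (adj_sym : symmetric adj) (alpha_irr : irredundant adj alpha).
Hypothesis alphaV : forall x y, adj x y -> alpha y x = sep_inv (alpha x y).
Hypothesis alpha_star : forall t x y, adj x t -> adj y t -> x <> y ->
  sep_le (alpha x t) (sep_inv (alpha y t)).

Lemma alpha_le_along_path p : forall b u, path adj b (u :: p) ->
  uniq (b :: u :: p) -> forall c, adj c (last u p) -> c \notin b :: u :: p ->
  sep_le (alpha c (last u p)) (alpha u b).
Proof.
elim: p => [|w p IHp] b u /= /andP[bu pu] /andP[b_notin uq] c c_last c_notin.
  rewrite (alphaV bu); apply: alpha_star => // Ecb.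
  by move: c_notin; rewrite Ecb inE eqxx.
apply: sep_le_trans (IHp u w pu uq c c_last _) _.
  by move: c_notin; rewrite inE negb_or => /andP[].
rewrite (alphaV bu); apply: alpha_star => //.
- by move: pu => /andP[]; rewrite adj_sym.
- by move=> Ewb; move: b_notin; rewrite Ewb !inE eqxx orbT.
Qed.

Lemma trivial_of_alpha_eq_path c d p : forall a b, adj a b -> adj c d ->
  path adj b p -> last b p = d -> uniq (b :: p) ->
  a \notin b :: p -> c \notin b :: p -> ~ (a = c /\ b = d) ->
  alpha a b = alpha c d -> trivial_sep (alpha a b).
Proof.
elim: p => [|v p IHp] a b ab cd /=.
  move=> _ Ebd _ _ _ neq_ac Eab; subst b.
  by case: (alpha_irr ab cd (fun Eac => neq_ac (conj Eac erefl)) Eab).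
move=> /andP[bv pv] last_p /andP[b_notin uq] a_notin c_notin _ Eab.
have vb : adj v b by rewrite adj_sym.
have neq_av : a <> v by move=> Eav; move: a_notin; rewrite Eav !inE eqxx orbT.
have [Eabv | neq_abv] := classic (alpha a b = alpha b v).
  rewrite Eabv; apply: (IHp b v) => //; last by rewrite -Eabv.
    by move: c_notin; rewrite inE negb_or => /andP[].
  by case=> Ebc _; move: c_notin; rewrite Ebc inE eqxx.
exists (alpha b v); split; split => //.
- by have := alpha_star ab vb neq_av; rewrite (alphaV bv) sep_inv_invol.
- rewrite Eab -last_p -(alphaV bv); apply: alpha_le_along_path => //=.
  + by rewrite bv.
  + by rewrite b_notin.
  + by rewrite last_p.
- by rewrite -(alphaV bv); exact: alpha_irr ab vb neq_av.
Qed.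

Lemma trivial_of_alpha_eq_edge_lt a b c d : adj a b -> adj c d ->
  ~ same_edge a b c d -> edge_lt adj a b d c ->
  alpha a b = alpha c d -> trivial_sep (alpha a b).
Proof.
move=> ab cd neq_e [_ [p [pp last_p uq a_notin c_notin]]].
apply: trivial_of_alpha_eq_path cd pp last_p uq a_notin c_notin _ => //.
by case=> Eac Ebd; apply: neq_e; left.
Qed.

End STreeChains.

Theorem lemma2p3 (S : sepsys) (F : (S -> Prop) -> Prop) (T : finType) (adj : rel T)
  (alpha : T -> T -> S) :
  (forall sigma, F sigma -> is_star sigma) ->
  is_Stree adj alpha -> Stree_over adj alpha F -> irredundant adj alpha ->
  (forall a b c d : T, adj a b -> adj c d -> ~ same_edge a b c d ->
     edge_lt adj a b d c -> alpha a b = alpha c d -> trivial_sep (alpha a b)) /\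
  (forall (r : S) (t1 t2 x1 x2 : T), t1 <> t2 ->
     (forall y, adj y t1 <-> y = x1) -> (forall y, adj y t2 <-> y = x2) ->
     alpha x1 t1 = sep_inv r -> alpha x2 t2 = sep_inv r ->
     trivial_sep r \/
     ((forall u v, adj u v -> same_edge u v t1 t2) /\ degenerate (alpha t1 t2))).
Proof.
move=> Fstar [[adj_sym [adj_irr [conn _]]] alphaV] over irr.
have alpha_star := star_le_assoc Fstar over irr.
have main := trivial_of_alpha_eq_edge_lt adj_sym irr alphaV alpha_star.
split=> // r t1 t2 x1 x2 neq_t leaf1 leaf2 E1 E2.
have alpha_leaf t x : (forall y, adj y t <-> y = x) -> alpha x t = sep_inv r ->
    alpha t x = r.
  move=> leaf Ext; have tx : adj t x by rewrite adj_sym (leaf x).2.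
  by apply: sep_inv_inj; rewrite -Ext (alphaV _ _ tx).
have [Ex1 | neq_x1t2] := eqVneq x1 t2.
  subst x1; have Ex2 : t1 = x2 by apply: (leaf2 t1).1; rewrite adj_sym (leaf1 _).2.
  subst x2; right; split; first exact: two_leaf_tree_edges.
  by rewrite /degenerate -(alphaV _ _ ((leaf2 t1).2 erefl)) E1 E2.
have t1x1 : adj t1 x1 by rewrite adj_sym (leaf1 _).2.
have t2x2 : adj t2 x2 by rewrite adj_sym (leaf2 _).2.
left; rewrite -(alpha_leaf _ _ leaf1 E1); apply: main t1x1 t2x2 _ _ _.
- by case=> [[]|[_ Ex1]] //; rewrite Ex1 eqxx in neq_x1t2.
- exact (leaves_edge_lt adj_sym adj_irr leaf1 leaf2 neq_t neq_x1t2 (conn x1 t2)).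
- by rewrite (alpha_leaf _ _ leaf1 E1) (alpha_leaf _ _ leaf2 E2).
Qed.
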